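(* Let $Q$ be a finite quiver with $kQ$ of finite GK-dimension, and let $v,w$ be cyclic vertices. Then $\mathrm{Hom}_{\mathrm{QGr}\,kQ}(\pi^*\mathcal O_v,\pi^*\mathcal O_w)\neq0$ if and only if $v=w$. In particular $\pi^*\mathcal O_v\not\cong\pi^*\mathcal O_w$ for $v\neq w$.
   Context: $k$ is a field; $kQ$ is the path algebra graded by path length; $\mathrm{QGr}\,kQ=\mathrm{Gr}\,kQ/\mathrm{Tors}\,kQ$ with quotient functor $\pi^*$, where $\mathrm{Tors}$ consists of graded modules in which every element is annihilated by $(kQ)_{\ge n}$ for some $n$. With finite GK-dimension each cyclic vertex $v$ lies on a unique simple cycle $p=(v=v_0,a_1,\dots,a_n,v_n=v)$, and $\mathcal O_v=e_vkQ/\bigoplus p^m a_1\cdots a_i b\,kQ$ (sum over $m\ge0$, $0\le i<n$, arrows $b\neq a_{i+1}$ with source $v_i$), a graded module with basis the images of $p^m a_1\cdots a_i$. *)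

From HB Require Import structures.
From mathcomp Require Import all_boot all_order all_algebra.
Set Implicit Arguments. Unset Strict Implicit. Unset Printing Implicit Defensive.
Import Order.TTheory GRing.Theory Num.Theory.
Local Open Scope ring_scope.

(* A finite quiver. Paths are written left to right: a1 a2 ... with
   qtgt a_i = qsrc a_{i+1}. *)
Record quiver := Quiver {
  qV : finType;
  qA : finType;
  qsrc : qA -> qV;
  qtgt : qA -> qV }.

Definition composable (Q : quiver) (s : seq (qA Q)) : bool :=
  sorted (fun a b => qtgt a == qsrc b) s.

(* number of paths of length m in Q (= dim (kQ)_m) *)
Definition npaths (Q : quiver) (m : nat) : nat :=
  if m is 0 then #|qV Q|
  else #|[set t : m.-tuple (qA Q) | composable (tval t)]|.

(* kQ (graded by path length, generated by kQ_0 + kQ_1) has finite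
   GK-dimension iff dim (kQ)_{<= n} grows at most polynomially in n. *)
Definition finite_GKdim (Q : quiver) : Prop :=
  exists C e : nat, forall n : nat,
    (\sum_(m < n.+1) npaths Q m <= C * n.+1 ^ e)%N.

Definition simple_cycle (Q : quiver) (v : qV Q) (c : seq (qA Q)) : bool :=
  [&& c != [::], composable c,
      omap (@qsrc Q) (ohead c) == Some v,
      omap (@qtgt Q) (ohead (rev c)) == Some v &
      uniq (map (@qsrc Q) c)].

(* Graded right kQ-modules, described as representations:
   gcomp d u = M_d e_u, and right multiplication by an arrow a maps
   M_d e_u to M_{d+1} e_{tgt a}; it is zero unless u = src a. *)
Record grmod (K : fieldType) (Q : quiver) := GrMod {
  gcomp : int -> qV Q -> lmodType K;
  gact : forall (d : int) (u : qV Q) (a : qA Q),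
           gcomp d u -> gcomp (d + 1) (qtgt a);
  gact_lin : forall d u a, linear (@gact d u a);
  gact_src : forall d u a x, qsrc a != u -> @gact d u a x = 0 }.

Arguments gcomp {K Q} g d u : rename.
Arguments gact {K Q} g d u a x : rename.

Section Modules.
Variables (K : fieldType) (Q : quiver).

Definition gsubset (M : grmod K Q) :=
  forall (d : int) (u : qV Q), gcomp M d u -> Prop.

Definition gincl (M : grmod K Q) (S T : gsubset M) : Prop :=
  forall d u x, S d u x -> T d u x.

Definition is_submod (M : grmod K Q) (S : gsubset M) : Prop :=
  [/\ (forall d u, S d u 0),
      (forall d u (k : K) x y, S d u x -> S d u y -> S d u (k *: x + y)) &
      (forall d u a x, S d u x -> S (d + 1) (qtgt a) (gact M d u a x))].

(* killed_in S n x : x . q lies in S for every path q of length n *)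
Fixpoint killed_in (M : grmod K Q) (S : gsubset M) (n : nat) :
    forall d u, gcomp M d u -> Prop :=
  match n with
  | 0 => fun d u x => S d u x
  | n'.+1 => fun d u x =>
      forall a : qA Q, killed_in S n' (gact M d u a x)
  end.

Definition gzero (M : grmod K Q) : gsubset M := fun d u x => x = 0.

(* M / S is torsion: every element is annihilated by (kQ)_{>= n} mod S *)
Definition torsion_quot (M : grmod K Q) (S : gsubset M) : Prop :=
  forall d u (x : gcomp M d u), exists n, killed_in S n x.

Definition torsion_sub (M : grmod K Q) (S : gsubset M) : Prop :=
  forall d u (x : gcomp M d u), S d u x -> exists n, killed_in (@gzero M) n x.

(* f (a family of linear maps M_d e_u -> N_d e_u), restricted to M',
   induces a degree-0 graded homomorphism M' -> N / N' *)
Definition grhom_mod (M N : grmod K Q) (M' : gsubset M) (N' : gsubset N)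
    (f : forall d u, gcomp M d u -> gcomp N d u) : Prop :=
  (forall d u, linear (f d u)) /\
  (forall d u a x, M' d u x ->
     N' (d + 1) (qtgt a)
        (f (d + 1) (qtgt a) (gact M d u a x) - gact N d u a (f d u x))).

(* Hom_{QGr kQ}(pi^* M, pi^* N) = colim Hom_{Gr kQ}(M', N / N'), over graded
   submodules M' <= M with M/M' torsion and torsion submodules N' <= N.
   It is nonzero iff some representative does not become zero after
   shrinking M' and enlarging N'. *)
Definition QHom_nonzero (M N : grmod K Q) : Prop :=
  exists (M' : gsubset M) (N' : gsubset N)
         (f : forall d u, gcomp M d u -> gcomp N d u),
    [/\ is_submod M' /\ torsion_quot M', is_submod N' /\ torsion_sub N',
        grhom_mod M' N' f &
        ~ (exists (M'' : gsubset M) (N'' : gsubset N),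
             [/\ is_submod M'' /\ gincl M'' M', torsion_quot M'',
                 is_submod N'' /\ gincl N' N'', torsion_sub N'' &
                 forall d u x, M'' d u x -> N'' d u (f d u x)])].

(* The module O_v attached to the simple cycle c = [:: a_1; ...; a_n] at v:
   its degree-d part (d >= 0) is one-dimensional, spanned by the image of
   p^m a_1 ... a_i (d = m n + i, 0 <= i < n), sitting at vertex v_i;
   right multiplication by a_{i+1} sends it to the next basis vector and
   every other arrow acts by zero. *)
Definition Odim (c : seq (qA Q)) (d : int) (u : qV Q) : nat :=
  if d is Posz m then omap (@qsrc Q) (onth c (m %% size c)) == Some u
  else false.

Definition Ocond (c : seq (qA Q)) (d : int) (u : qV Q) (a : qA Q) : bool :=
  if d is Posz m then (onth c (m %% size c) == Some a) && (qsrc a == u)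
  else false.

Definition Oact (c : seq (qA Q)) (d : int) (u : qV Q) (a : qA Q)
    (x : 'rV[K]_(Odim c d u)) : 'rV[K]_(Odim c (d + 1) (qtgt a)) :=
  x *m (if Ocond c d u a then const_mx 1 else 0).

Lemma Oact_lin c d u a : linear (@Oact c d u a).
Proof. by move=> k x y; rewrite /Oact mulmxDl scalemxAl. Qed.

Lemma Oact_src c d u a x : qsrc a != u -> @Oact c d u a x = 0.
Proof.
move=> h; rewrite /Oact /Ocond; case: d x => [m|m] x;
  last by rewrite mulmx0.
by rewrite (negbTE h) andbF mulmx0.
Qed.

Definition Omod (c : seq (qA Q)) : grmod K Q :=
  @GrMod K Q (fun d u => 'rV[K]_(Odim c d u)) (@Oact c)
    (@Oact_lin c) (@Oact_src c).

End Modules.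

From mathcomp Require Import all_boot all_order all_algebra zify.
Set Implicit Arguments. Unset Strict Implicit. Unset Printing Implicit Defensive.

(* A vertex lies on at most one simple cycle: two distinct simple cycles c1, c2
   at u give distinct closed walks c1^|c2| and c2^|c1| of a common length L,
   and their free concatenations give 2^k paths of length kL, which polynomial
   growth forbids.  Hence the cycle read off at any vertex of the support of
   O_v recovers v, so for v <> w the supports of O_v and O_w are disjoint and
   every graded map between (submodules of) them is zero.  Conversely O_v is
   torsion-free, as the next arrow of the cycle sends a nonzero homogeneous
   element to a nonzero one; so no submodule of O_v with torsion quotient maps
   into a torsion submodule, and the identity survives in QGr kQ. *)

Lemma expn2_gt_affine (B e : nat) : exists j, B + e * j < 2 ^ j.
Proof.
pose t := B + 2 * e + 1; exists (2 * t).
have ht : t < 2 ^ t := ltn_expl t (ltnSn 1).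
rewrite mul2n -addnn expnD; move: ht; rewrite /t; set P := 2 ^ _; nia.
Qed.

Lemma expn2_not_poly_bounded (C e L : nat) :
  ~ (forall k, 0 < k -> 2 ^ k <= C * (k * L).+1 ^ e).
Proof.
move=> bounded; pose B := C * L.+1 ^ e.
have [j ltBj] := expn2_gt_affine B e.
have poly_le : C * (2 ^ j * L).+1 ^ e <= B * 2 ^ (e * j).
  rewrite /B -mulnA leq_mul2l (mulnC e) expnM -expnMn; apply/orP; right.
  case: e {ltBj B bounded} => [//|e]; rewrite leq_exp2r //.
  by have := expn_gt0 2 j; nia.
have : 2 ^ 2 ^ j < 2 ^ (B + e * j).
  apply: leq_ltn_trans (bounded _ (expn_gt0 2 j)) _.
  apply: leq_ltn_trans poly_le _.
  by rewrite expnD ltn_pmul2r ?expn_gt0 // ltn_expl.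
by rewrite ltn_exp2l // ltnNge (ltnW ltBj).
Qed.

Lemma flatten_map_inj (T S : Type) (L : nat) (f : T -> seq S) :
  injective f -> (forall x, size (f x) = L) ->
  forall s1 s2, size s1 = size s2 ->
  flatten (map f s1) = flatten (map f s2) -> s1 = s2.
Proof.
move=> f_inj f_size; elim=> [|x s1 IH] [|y s2] //= [eq_size] eq_flat.
have := congr1 (take L) eq_flat; rewrite !take_size_cat // => /f_inj ->.
congr (_ :: _); apply: IH eq_size _.
by have := congr1 (drop L) eq_flat; rewrite !drop_size_cat.
Qed.

Lemma size_flatten_map_const (T S : Type) (L : nat) (f : T -> seq S) s :
  (forall x, size (f x) = L) -> size (flatten (map f s)) = (size s * L)%N.
Proof. by move=> f_size; elim: s => //= x s IH; rewrite size_cat IH f_size. Qed.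

Lemma size_flatten_nseq (T : Type) n (s : seq T) :
  size (flatten (nseq n s)) = (n * size s)%N.
Proof. by elim: n => //= n IH; rewrite size_cat IH mulSn. Qed.

Lemma ohead_rev (T : Type) (x : T) p : ohead (rev (x :: p)) = Some (last x p).
Proof. by rewrite lastI rev_rcons. Qed.

Lemma cycle_nth_mod (T : Type) (e : rel T) (x0 : T) (c : seq T) (i : nat) :
  0 < size c -> cycle e c ->
  e (nth x0 c (i %% size c)) (nth x0 c (i.+1 %% size c)).
Proof.
move=> n_gt0; rewrite (cycle_path x0) => /(pathP x0) c_path.
have lt_i : i %% size c < size c by rewrite ltn_mod.
have -> : i.+1 %% size c = (i %% size c).+1 %% size c.
  by rewrite -addn1 -[in RHS]addn1 modnDml.
case: (ltngtP (i %% size c).+1 (size c)) => [lt_i1 | gt_i1 | eq_i1].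
- by rewrite [_.+1 %% _]modn_small //; apply: c_path lt_i1.
- by move: gt_i1; rewrite ltnS leqNgt lt_i.
have last_c : last x0 c = nth x0 c (i %% size c) by rewrite -nth_last -{1}eq_i1.
by move: (c_path 0 n_gt0); rewrite eq_i1 modnn /= last_c.
Qed.

Section ClosedWalks.
Variable Q : quiver.
Implicit Types (u : qV Q) (s c : seq (qA Q)).

Definition closed_walk u s : bool :=
  composable s && (if s is a :: p then (qsrc a == u) && (qtgt (last a p) == u)
                   else true).

Lemma closed_walk_cat u s1 s2 :
  closed_walk u s1 -> closed_walk u s2 -> closed_walk u (s1 ++ s2).
Proof.
case: s1 => [//|a p]; case: s2 => [|b q]; first by rewrite cats0.
rewrite /closed_walk /composable /= => /andP[hp /andP[ha hl]] /andP[hq /andP[hb hl']].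
by rewrite cat_path hp /= ha last_cat /= hl' hq (eqP hl) (eqP hb) eqxx.
Qed.

Lemma closed_walk_flatten u ss : all (closed_walk u) ss -> closed_walk u (flatten ss).
Proof. by elim: ss => //= s ss IH /andP[hs /IH]; apply: closed_walk_cat. Qed.

Lemma npaths_ge_exp2 u X Y (L k : nat) :
  closed_walk u X -> closed_walk u Y -> size X = L -> size Y = L -> X != Y ->
  0 < k -> 0 < L -> 2 ^ k <= npaths Q (k * L).
Proof.
move=> cX cY sX sY neXY k_gt0 L_gt0.
pose f (b : bool) := if b then X else Y.
have f_size b : size (f b) = L by case: b.
have f_inj : injective f by case; case=> //= eXY; move: neXY; rewrite eXY eqxx.
have g_size (t : k.-tuple bool) : size (flatten (map f t)) == k * L.
  by rewrite (size_flatten_map_const _ f_size) size_tuple.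
pose g t : (k * L).-tuple (qA Q) := Tuple (g_size t).
have g_inj : injective g.
  move=> t1 t2 /(congr1 val) /= eq_flat; apply: val_inj.
  by apply: (flatten_map_inj f_inj f_size _ eq_flat); rewrite !size_tuple.
have -> : npaths Q (k * L) = #|[set t : (k * L).-tuple (qA Q) | composable t]|.
  by rewrite /npaths; case: (k * L) (muln_gt0 k L) => [|m]; rewrite ?k_gt0 ?L_gt0.
rewrite -[2]card_bool -card_tuple -(card_imset _ g_inj).
apply/subset_leq_card/subsetP => _ /imsetP[t _ ->]; rewrite inE.
have /andP[] // : closed_walk u (flatten (map f t)).
by apply/closed_walk_flatten/allP => _ /mapP[[] _ ->].
Qed.

Lemma simple_cycle_closed_walk u c : simple_cycle u c -> closed_walk u c.
Proof.
case: c => [|a p]; rewrite /simple_cycle ?eqxx // ohead_rev.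
by case/and5P=> _ hc /eqP[<-] /eqP[hl] _; rewrite /closed_walk hc /= hl !eqxx.
Qed.

Lemma simple_cycle_size_gt0 u c : simple_cycle u c -> 0 < size c.
Proof. by case: c => //; rewrite /simple_cycle eqxx. Qed.

Lemma simple_cycle_prefix u c1 c2 :
  simple_cycle u c1 -> simple_cycle u c2 -> prefix c1 c2 -> c1 = c2.
Proof.
case: c1 => [|a p]; first by rewrite /simple_cycle eqxx.
move=> /simple_cycle_closed_walk /andP[_ /andP[/eqP ha /eqP hl]] sc2 pre.
case/prefixP: pre => [[|b q] ->] in sc2 *; first by rewrite cats0.
case/and5P: sc2 => _; rewrite /composable /= cat_path => /andP[_ /andP[/eqP hb _]] _ _.
rewrite /= map_cat mem_cat => /andP[not_in _]; case/negP: not_in.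
by rewrite !inE -hb hl ha eqxx !orbT.
Qed.

Lemma simple_cycle_powers_neq u c1 c2 :
  simple_cycle u c1 -> simple_cycle u c2 -> c1 != c2 ->
  flatten (nseq (size c2) c1) != flatten (nseq (size c1) c2).
Proof.
wlog le12 : c1 c2 / size c1 <= size c2 => [hyp sc1 sc2 ne12|].
  case: (leqP (size c1) (size c2)) => [/hyp|/ltnW/hyp]; first exact.
  by move=> /(_ sc2 sc1) neq21; rewrite eq_sym neq21 // eq_sym.
move=> sc1 sc2 ne12; apply: contra ne12 => /eqP eq_pow; apply/eqP.
apply: (simple_cycle_prefix sc1 sc2); rewrite prefixE.
move: eq_pow; rewrite -(prednK (simple_cycle_size_gt0 sc2)).
rewrite -[in nseq _ c2](prednK (simple_cycle_size_gt0 sc1)) /=.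
by move/(congr1 (take (size c1))); rewrite take_size_cat // takel_cat // => <-.
Qed.

Lemma simple_cycle_unique u c1 c2 :
  finite_GKdim Q -> simple_cycle u c1 -> simple_cycle u c2 -> c1 = c2.
Proof.
move=> [C [e bounded]] sc1 sc2; apply/eqP/negPn/negP => ne12.
pose L := (size c1 * size c2)%N.
have L_gt0 : 0 < L.
  by rewrite muln_gt0 (simple_cycle_size_gt0 sc1) (simple_cycle_size_gt0 sc2).
have walk (c : seq (qA Q)) n : simple_cycle u c -> closed_walk u (flatten (nseq n c)).
  by move=> sc; apply: closed_walk_flatten; rewrite all_nseq simple_cycle_closed_walk ?orbT.
apply: (@expn2_not_poly_bounded C e L) => k k_gt0.
apply: leq_trans (bounded (k * L)); rewrite big_ord_recr /=.
apply: leq_trans (leq_addl _ _).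
apply: npaths_ge_exp2 (walk _ _ sc1) (walk _ _ sc2) _ _
  (simple_cycle_powers_neq sc1 sc2 ne12) k_gt0 L_gt0.
  by rewrite size_flatten_nseq mulnC.
by rewrite size_flatten_nseq.
Qed.
End ClosedWalks.

Section Rotation.
Variable Q : quiver.
Implicit Types (u v : qV Q) (c : seq (qA Q)) (a : qA Q).

Lemma simple_cycle_cons v a p : simple_cycle v (a :: p) =
  [&& cycle (fun a b => qtgt a == qsrc b) (a :: p), qsrc a == v
    & uniq (map (@qsrc Q) (a :: p))].
Proof.
rewrite /simple_cycle ohead_rev /composable /= rcons_path !(inj_eq Some_inj).
by case: (path _ a p); case: (qsrc a =P v) => [->|] //=; rewrite andbF.
Qed.

Lemma simple_cycle_cycle v c :
  simple_cycle v c -> cycle (fun a b => qtgt a == qsrc b) c.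
Proof. by case: c => // a p; rewrite simple_cycle_cons => /andP[]. Qed.

Lemma simple_cycle_rot v c i a : simple_cycle v c -> onth c i = Some a ->
  simple_cycle (qsrc a) (rot i c).
Proof.
move=> sc ha; have lt_i : i < size c by rewrite -onthTE ha.
have rot_ca : rot i c = a :: (drop i.+1 c ++ take i c).
  by rewrite /rot (drop_nth a lt_i) (onth_nth a _ _ _ ha).
rewrite rot_ca simple_cycle_cons -rot_ca eqxx rot_cycle map_rot rot_uniq.
by rewrite (simple_cycle_cycle sc); case/and5P: sc.
Qed.

Lemma simple_cycle_next v c m a : simple_cycle v c ->
  onth c (m %% size c) = Some a ->
  exists2 b, onth c (m.+1 %% size c) = Some b & qtgt a = qsrc b.
Proof.
move=> sc ha; have n_gt0 := simple_cycle_size_gt0 sc.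
exists (nth a c (m.+1 %% size c)); first by rewrite onthE (nth_map a) ?ltn_mod.
apply/eqP; rewrite -{1}(onth_nth a _ _ _ ha).
exact: (cycle_nth_mod a m n_gt0 (simple_cycle_cycle sc)).
Qed.
End Rotation.

Lemma simple_cycle_vertex_inj (Q : quiver) (v w : qV Q) c :
  simple_cycle v c -> simple_cycle w c -> v = w.
Proof.
by move=> /and5P[_ _ /eqP hv _ _] /and5P[_ _ /eqP hw _ _]; apply: Some_inj; rewrite -hv -hw.
Qed.

Lemma Odim_supports_disjoint (Q : quiver) (v w : qV Q) cv cw d u :
  finite_GKdim Q -> simple_cycle v cv -> simple_cycle w cw ->
  (0 < Odim cv d u)%N -> (0 < Odim cw d u)%N -> v = w.
Proof.
move=> gk sv sw; case: d => [m|//]; rewrite /Odim !lt0b.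
case ha: onth => [a|//] /eqP[au]; case hb: onth => [b|//] /eqP[bu].
have := simple_cycle_rot sw hb; rewrite bu -au.
move/(simple_cycle_unique gk (simple_cycle_rot sv ha)) => eq_rot.
have eq_size : size cv = size cw by rewrite -(size_rot (m %% size cv)) eq_rot size_rot.
move: eq_rot; rewrite eq_size => /rot_inj eq_c.
by apply: simple_cycle_vertex_inj sv _; rewrite eq_c.
Qed.

Import GRing.Theory.
Local Open Scope ring_scope.

Lemma linear_fun0 (R : pzRingType) (U V : lmodType R) (f : U -> V) :
  linear f -> f 0 = 0.
Proof.
move=> f_lin; have := f_lin 1 0 0; rewrite !scale1r addr0 => f00.
by apply: (@addrI _ (f 0)); rewrite addr0 -{1}f00.
Qed.

Lemma rowV_dim0 (R : nmodType) n (x : 'rV[R]_n) : n = 0%N -> x = 0.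
Proof. by move=> n0; subst n; apply: thinmx0. Qed.

Lemma rowV_dim_gt0 (R : nmodType) n (x : 'rV[R]_n) : x != 0 -> (0 < n)%N.
Proof. by rewrite lt0n; apply: contra => /eqP/(rowV_dim0 x)->. Qed.

Lemma const_mx1_neq0 (R : nzRingType) n : (0 < n)%N -> (const_mx 1 : 'rV[R]_n) != 0.
Proof.
move=> n_gt0; apply/eqP => /matrixP/(_ 0 (Ordinal n_gt0)).
by rewrite !mxE; apply/eqP/oner_neq0.
Qed.

Lemma mul_const_mx1_neq0 (R : nzRingType) n1 n2 (x : 'rV[R]_n1) :
  (n1 <= 1)%N -> x != 0 -> (0 < n2)%N -> x *m (const_mx 1 : 'M_(n1, n2)) != 0.
Proof.
case: n1 x => [|[|//]] x _ x_nz n2_gt0; first by rewrite (rowV_dim0 x) ?eqxx in x_nz.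
apply: contra x_nz => /eqP/matrixP/(_ 0 (Ordinal n2_gt0)).
rewrite !mxE big_ord1 mxE mulr1 => x00; apply/eqP/rowP => j.
by rewrite ord1 x00 mxE.
Qed.

Section OModule.
Variables (K : fieldType) (Q : quiver) (v : qV Q) (c : seq (qA Q)).
Hypothesis sc : simple_cycle v c.
Local Notation O := (Omod K c).

Lemma Odim_gt0 d u : (0 < Odim c d u)%N ->
  exists2 m : nat, d = m & exists2 a, onth c (m %% size c) = Some a & qsrc a = u.
Proof.
case: d => [m|//]; rewrite /Odim lt0b; case ha: onth => [a|//] /eqP[au].
by exists m => //; exists a.
Qed.

Lemma Oact_neq0 d u (x : gcomp O d u) : x != 0 -> exists a, gact O d u a x != 0.
Proof.
move=> x_nz; have [m ed [a ha au]] := Odim_gt0 (rowV_dim_gt0 x_nz); subst d.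
exists a; rewrite /= /Oact /Ocond ha au !eqxx.
apply: (mul_const_mx1_neq0 _ x_nz); first by rewrite /Odim leq_b1.
have [b hb ab] := simple_cycle_next sc ha.
by rewrite addn1 /Odim hb /= ab eqxx.
Qed.

Lemma killed_in_neq0 (S : gsubset O) n d u (x : gcomp O d u) :
  x != 0 -> killed_in S n x -> exists d' u' (y : gcomp O d' u'), y != 0 /\ S d' u' y.
Proof.
elim: n d u x => [|n IH] d u x x_nz /= killed; first by exists d, u, x.
by have [a ax_nz] := Oact_neq0 x_nz; apply: IH ax_nz (killed a).
Qed.

Lemma torsion_sub_Omod_eq0 (S : gsubset O) d u (x : gcomp O d u) :
  torsion_sub S -> S d u x -> x = 0.
Proof.
move=> tors Sx; apply/eqP/negPn/negP => x_nz.
have [n killed] := tors _ _ _ Sx.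
by have [? [? [y [/eqP y_nz /y_nz]]]] := killed_in_neq0 x_nz killed.
Qed.

Lemma torsion_quot_Omod_neq0 (S : gsubset O) :
  torsion_quot S -> exists d u (y : gcomp O d u), y != 0 /\ S d u y.
Proof.
move=> tors; have O0v : (0 < Odim c 0 v)%N.
  by case/and5P: sc => _ _; rewrite /Odim /= mod0n; case: (c) => //= a p ->.
pose x : gcomp O 0 v := const_mx 1.
have [n killed] := tors _ _ x.
exact: killed_in_neq0 (const_mx1_neq0 _ O0v) killed.
Qed.

Lemma QHom_nonzero_Omod_refl : QHom_nonzero O O.
Proof.
exists (fun _ _ _ => True), (@gzero K Q O), (fun _ _ x => x); split.
- by split; [split | exists 0%N].
- split; first split=> [//|d u k x y -> ->|d u a x ->].
  + by rewrite scaler0 addr0.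
  + by rewrite /= /Oact mul0mx.
  + by move=> d u x x0; exists 0%N.
- by split=> [d u k x y|d u a x _]; rewrite /gzero ?subrr.
- move=> [M'' [N'' [[_ _] tors_quot [_ _] tors_sub inclf]]].
  have [d [u [y [y_nz M''y]]]] := torsion_quot_Omod_neq0 tors_quot.
  by move/eqP: y_nz; apply; apply: torsion_sub_Omod_eq0 tors_sub (inclf _ _ _ M''y).
Qed.
End OModule.

Lemma QHom_nonzero_Omod_eq (K : fieldType) (Q : quiver) (v w : qV Q) cv cw :
  finite_GKdim Q -> simple_cycle v cv -> simple_cycle w cw ->
  QHom_nonzero (Omod K cv) (Omod K cw) -> v = w.
Proof.
move=> gk sv sw [M' [N' [f [[subM' tqM'] [subN' tsN'] [f_lin _] not_zero]]]].
case: (v =P w) => // neq_vw; case: not_zero; exists M', N'.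
split=> //; [by split | by split | move=> d u x _].
suff -> : f d u x = 0 by case: subN'.
have [Ow0|Ow_gt0] := posnP (Odim cw d u); first exact: rowV_dim0.
have [Ov0|Ov_gt0] := posnP (Odim cv d u).
  by rewrite (rowV_dim0 (x : 'rV_(Odim cv d u)) Ov0) linear_fun0.
by case: neq_vw; apply: Odim_supports_disjoint gk sv sw Ov_gt0 Ow_gt0.
Qed.

Theorem lemma5p2 (K : fieldType) (Q : quiver) (v w : qV Q)
    (cv cw : seq (qA Q)) :
  finite_GKdim Q ->
  simple_cycle v cv -> simple_cycle w cw ->
  (QHom_nonzero (Omod K cv) (Omod K cw) <-> v = w).
Proof.
move=> gk sv sw; split; first exact: QHom_nonzero_Omod_eq.
move=> eq_vw; subst w; rewrite -(simple_cycle_unique gk sv sw).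
exact: QHom_nonzero_Omod_refl sv.
Qed.
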